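(* There exist a topologically regular compact set $K\subseteq\mathbb{R}^2$ and a function $F\in C^1_{\mathrm{int}}(K)$ such that $F\notin C^1(K)$. More precisely, there is a rectifiable path $\gamma:[0,1]\to K$ with $\int_\gamma dF=0$ while $F(\gamma(1))-F(\gamma(0))=1$, where $dF$ denotes the continuous extension to $K$ of the derivative of $F$ on the interior of $K$.
   Context: A compact set $K$ is topologically regular if it is the closure of its interior $\mathring K$. $C^1_{\mathrm{int}}(K)$ is the set of functions $f\in C^1(\mathring K)$ (classical continuously differentiable functions on the open set $\mathring K$) such that $f$ and its derivative $df$ extend continuously to $K$. $C^1(K)$ is the set of $f:K\to\mathbb{R}$ admitting a continuous $df:K\to\mathbb{R}^2$ with $\lim_{y\to x,\,y\in K\setminus\{x\}}\frac{f(y)-f(x)-\langle df(x),y-x\rangle}{|y-x|}=0$ for all $x\in K$. Rectifiable paths (continuous maps of finite length) and path integrals $\int_\gamma F$ (limits of Riemann–Stieltjes sums $\sum_j\langle F(\gamma(\tau_j)),\gamma(t_j)-\gamma(t_{j-1})\rangle$) are as usual. *)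

From Stdlib Require Export Reals Lra.
Open Scope R_scope.

Definition pt : Type := (R * R)%type.

Definition padd (x y : pt) : pt := (fst x + fst y, snd x + snd y).
Definition psub (x y : pt) : pt := (fst x - fst y, snd x - snd y).
Definition inner (x y : pt) : R := fst x * fst y + snd x * snd y.
Definition pnorm (x : pt) : R := sqrt (inner x x).
Definition pdist (x y : pt) : R := pnorm (psub x y).

Definition interior (K : pt -> Prop) (x : pt) : Prop :=
  exists e, 0 < e /\ forall y, pdist y x < e -> K y.
Definition closure (A : pt -> Prop) (x : pt) : Prop :=
  forall e, 0 < e -> exists y, A y /\ pdist y x < e.
Definition closed_set (A : pt -> Prop) : Prop := forall x, closure A x -> A x.
Definition bounded_set (A : pt -> Prop) : Prop :=
  exists M, forall x, A x -> pnorm x <= M.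
(* compact subset of R^2 (Heine-Borel: closed and bounded) *)
Definition compact_set (K : pt -> Prop) : Prop := closed_set K /\ bounded_set K.

Definition top_regular (K : pt -> Prop) : Prop :=
  forall x, K x <-> closure (interior K) x.

Definition cont_on_R (A : pt -> Prop) (f : pt -> R) : Prop :=
  forall x, A x -> forall e, 0 < e -> exists d, 0 < d /\
    forall y, A y -> pdist y x < d -> Rabs (f y - f x) < e.
Definition cont_on_pt (A : pt -> Prop) (f : pt -> pt) : Prop :=
  forall x, A x -> forall e, 0 < e -> exists d, 0 < d /\
    forall y, A y -> pdist y x < d -> pdist (f y) (f x) < e.

Definition has_deriv_at (f : pt -> R) (x L : pt) : Prop :=
  forall e, 0 < e -> exists d, 0 < d /\
    forall y, y <> x -> pdist y x < d ->
      Rabs (f y - f x - inner L (psub y x)) <= e * pdist y x.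

(* C^1_int(K): F restricted to the interior is C^1 with derivative dF there,
   and F, dF (given on all of K) are continuous on K, i.e. they are the
   continuous extensions to K. *)
Definition C1_int (K : pt -> Prop) (F : pt -> R) (dF : pt -> pt) : Prop :=
  (forall x, interior K x -> has_deriv_at F x (dF x)) /\
  cont_on_pt (interior K) dF /\
  cont_on_R K F /\ cont_on_pt K dF.

(* Whitney-type C^1(K) *)
Definition C1_on (K : pt -> Prop) (f : pt -> R) : Prop :=
  exists df : pt -> pt, cont_on_pt K df /\
    forall x, K x -> forall e, 0 < e -> exists d, 0 < d /\
      forall y, K y -> y <> x -> pdist y x < d ->
        Rabs (f y - f x - inner (df x) (psub y x)) <= e * pdist y x.

Definition path_continuous (g : R -> pt) : Prop :=
  forall t, 0 <= t <= 1 -> forall e, 0 < e -> exists d, 0 < d /\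
    forall s, 0 <= s <= 1 -> Rabs (s - t) < d -> pdist (g s) (g t) < e.

Fixpoint rsum (f : nat -> R) (n : nat) : R :=
  match n with O => 0 | S m => rsum f m + f m end.

Definition partition01 (t : nat -> R) (n : nat) : Prop :=
  t O = 0 /\ t n = 1 /\ forall i, (i < n)%nat -> t i <= t (S i).

Definition rectifiable (g : R -> pt) : Prop :=
  path_continuous g /\
  exists M, forall t n, partition01 t n ->
    rsum (fun i => pdist (g (t (S i))) (g (t i))) n <= M.

Definition path_integral_is (G : pt -> pt) (g : R -> pt) (I : R) : Prop :=
  forall e, 0 < e -> exists d, 0 < d /\
    forall (t tau : nat -> R) (n : nat), partition01 t n ->
      (forall i, (i < n)%nat -> t (S i) - t i < d) ->
      (forall i, (i < n)%nat -> t i <= tau i <= t (S i)) ->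
      Rabs (rsum (fun i => inner (G (g (tau i))) (psub (g (t (S i))) (g (t i)))) n - I) < e.

(* Let c be the Cantor function and let K consist of the points (x, y) such that
   c is constant on the segment [x - |y|, x + |y|] and this segment lies in
   [0, 1]: the base [0, 1] x {0} together with a diamond erected over every
   interval on which c is constant.  Take F (x, y) = c x and dF = 0.  Interior
   points of K lie inside diamonds, where F is locally constant, so F is in
   C^1_int(K) with derivative 0; along the base, however, F climbs from 0 to 1
   and c (3^-k) = 2^-k excludes any Whitney derivative at the origin.  The
   plateaus of c are dense in [0, 1], which makes K the closure of its
   interior.  The Cantor function itself is the limit of the iterates of its
   self-similarity operator, a contraction by 1/2. *)

From Stdlib Require Import Lia Psatz.
Open Scope R_scope.

Lemma Rabs_fst_le_pnorm v : Rabs (fst v) <= pnorm v.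
Proof.
  unfold pnorm, inner. rewrite <- sqrt_Rsqr_abs. apply sqrt_le_1_alt.
  unfold Rsqr. nra.
Qed.

Lemma Rabs_snd_le_pnorm v : Rabs (snd v) <= pnorm v.
Proof.
  unfold pnorm, inner. rewrite <- sqrt_Rsqr_abs. apply sqrt_le_1_alt.
  unfold Rsqr. nra.
Qed.

Lemma pnorm_le_Rabs_sum v : pnorm v <= Rabs (fst v) + Rabs (snd v).
Proof.
  unfold pnorm, inner.
  pose proof (Rabs_pos (fst v)); pose proof (Rabs_pos (snd v)).
  rewrite <- (sqrt_square (Rabs (fst v) + Rabs (snd v))) by lra.
  apply sqrt_le_1_alt.
  pose proof (Rsqr_abs (fst v)); pose proof (Rsqr_abs (snd v)). unfold Rsqr in *. nra.
Qed.

Lemma pnorm_horizontal v : snd v = 0 -> pnorm v = Rabs (fst v).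
Proof.
  intros H. unfold pnorm, inner. rewrite H, <- sqrt_Rsqr_abs. f_equal. unfold Rsqr. ring.
Qed.

Lemma pnorm_vertical v : fst v = 0 -> pnorm v = Rabs (snd v).
Proof.
  intros H. unfold pnorm, inner. rewrite H, <- sqrt_Rsqr_abs. f_equal. unfold Rsqr. ring.
Qed.

Lemma pdist_fst p q : Rabs (fst p - fst q) <= pdist p q.
Proof. exact (Rabs_fst_le_pnorm (psub p q)). Qed.

Lemma pdist_snd p q : Rabs (snd p - snd q) <= pdist p q.
Proof. exact (Rabs_snd_le_pnorm (psub p q)). Qed.

Lemma pdist_horizontal a b c : pdist (a, c) (b, c) = Rabs (a - b).
Proof. unfold pdist. apply pnorm_horizontal. simpl. ring. Qed.

Lemma pdist_vertical a b c : pdist (a, b) (a, c) = Rabs (b - c).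
Proof. unfold pdist. apply pnorm_vertical. simpl. ring. Qed.

Lemma pdist_refl p : pdist p p = 0.
Proof. destruct p. rewrite pdist_vertical, Rminus_diag. apply Rabs_R0. Qed.

Lemma pdist_nonneg p q : 0 <= pdist p q.
Proof. apply sqrt_pos. Qed.

Lemma interior_incl K p : interior K p -> K p.
Proof. intros [e [He H]]. apply H. rewrite pdist_refl. exact He. Qed.

Lemma continuity_pt_ball f x : continuity_pt f x ->
  forall e, 0 < e -> exists d, 0 < d /\ forall y, Rabs (y - x) < d -> Rabs (f y - f x) < e.
Proof.
  intros Hf e He. destruct (Hf e He) as [d [Hd H]]. exists d. split; [exact Hd |].
  intros y Hy. destruct (Req_dec y x) as [-> | Hyx].
  - rewrite Rminus_diag, Rabs_R0. exact He.
  - apply (H y). split; [split; [exact I | congruence] | exact Hy].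
Qed.

Lemma has_deriv_at_locally_const F x :
  (exists d, 0 < d /\ forall y, pdist y x < d -> F y = F x) -> has_deriv_at F x (0, 0).
Proof.
  intros [d [Hd HF]] e He. exists d. split; [exact Hd |].
  intros y _ Hy. rewrite (HF y Hy). unfold inner. simpl.
  rewrite Rmult_0_l, Rmult_0_l, Rplus_0_r, !Rminus_diag, Rabs_R0.
  apply Rmult_le_pos; [lra | apply pdist_nonneg].
Qed.

Lemma cont_on_pt_const A (c : pt) : cont_on_pt A (fun _ => c).
Proof.
  intros x _ e He. exists 1. split; [lra |]. intros. rewrite pdist_refl. exact He.
Qed.

Lemma rsum_ext (a b : nat -> R) n :
  (forall i, (i < n)%nat -> a i = b i) -> rsum a n = rsum b n.
Proof.
  induction n as [| n IH]; intros H; simpl; [reflexivity |].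
  rewrite IH, H; [reflexivity | lia | intros i Hi; apply H; lia].
Qed.

Lemma rsum_telescope (t : nat -> R) n : rsum (fun i => t (S i) - t i) n = t n - t O.
Proof. induction n as [| n IH]; simpl; [ring | rewrite IH; ring]. Qed.

Definition axis_path (t : R) : pt := (t, 0).

Lemma rectifiable_axis_path : rectifiable axis_path.
Proof.
  split.
  - intros t _ e He. exists e. split; [exact He |].
    intros s _ Hs. unfold axis_path. rewrite pdist_horizontal. exact Hs.
  - exists 1. intros t n [T0 [Tn Tmono]]. unfold axis_path.
    rewrite (rsum_ext _ (fun i => t (S i) - t i)), rsum_telescope, T0, Tn; [lra |].
    intros i Hi. rewrite pdist_horizontal. apply Rabs_pos_eq.
    specialize (Tmono i Hi). lra.
Qed.

Lemma path_integral_zero_field g : path_integral_is (fun _ => (0, 0)) g 0.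
Proof.
  intros e He. exists 1. split; [lra |]. intros t tau n _ _ _.
  replace (rsum _ n) with 0; [rewrite Rminus_0_r, Rabs_R0; exact He |].
  induction n as [| n IH]; simpl; [reflexivity |].
  rewrite <- IH. unfold inner. simpl. ring.
Qed.

Definition plateau (f : R -> R) (p : pt) : Prop :=
  forall z, Rabs (z - fst p) <= Rabs (snd p) -> 0 <= z <= 1 /\ f z = f (fst p).

Section Plateau.

Variable f : R -> R.

Lemma plateau_axis x : 0 <= x <= 1 -> plateau f (x, 0).
Proof.
  intros Hx z Hz. simpl in Hz. rewrite Rabs_R0 in Hz.
  assert (z = x) as -> by (split_Rabs; lra). split; [exact Hx | reflexivity].
Qed.

Lemma plateau_center x y : plateau f (x, y) -> 0 <= x <= 1.
Proof. intros H. apply (H x). simpl. rewrite Rminus_diag, Rabs_R0. apply Rabs_pos. Qed.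

Lemma plateau_bounds x y : plateau f (x, y) -> 0 <= x <= 1 /\ Rabs y <= 1/2.
Proof.
  intros H. pose proof (Rabs_pos y).
  destruct (H (x + Rabs y)) as [[_ Hr] _]; simpl.
  { replace (x + Rabs y - x) with (Rabs y) by ring. rewrite Rabs_Rabsolu. lra. }
  destruct (H (x - Rabs y)) as [[Hl _] _]; simpl.
  { replace (x - Rabs y - x) with (- Rabs y) by ring. rewrite Rabs_Ropp, Rabs_Rabsolu. lra. }
  lra.
Qed.

Lemma plateau_bounded : bounded_set (plateau f).
Proof.
  exists 2. intros [x y] Hp. destruct (plateau_bounds x y Hp) as [Hx Hy].
  eapply Rle_trans; [apply pnorm_le_Rabs_sum |]. simpl. rewrite Rabs_pos_eq; lra.
Qed.

Lemma plateau_sub x y u v :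
  plateau f (x, y) -> Rabs (u - x) + Rabs v <= Rabs y -> plateau f (u, v).
Proof.
  intros H Huv z Hz. unfold plateau in H. simpl in *.
  pose proof (Rdist_tri z x u). unfold Rdist in *.
  pose proof (Rabs_pos v).
  destruct (H z ltac:(lra)) as [Hz01 Hfz]. destruct (H u ltac:(lra)) as [_ Hfu].
  split; [exact Hz01 | congruence].
Qed.

Lemma plateau_interior x y u v :
  plateau f (x, y) -> Rabs (u - x) + Rabs v < Rabs y -> interior (plateau f) (u, v).
Proof.
  intros H Huv. exists ((Rabs y - Rabs (u - x) - Rabs v) / 2). split; [lra |].
  intros [a b] Hab. apply (plateau_sub x y); [exact H |].
  pose proof (pdist_fst (a, b) (u, v)); pose proof (pdist_snd (a, b) (u, v)). simpl in *.
  pose proof (Rdist_tri a x u). pose proof (Rabs_triang_inv b v). unfold Rdist in *. lra.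
Qed.

Lemma interior_plateau_locally_const p : interior (plateau f) p ->
  exists d, 0 < d /\ forall q, pdist q p < d -> f (fst q) = f (fst p).
Proof.
  intros [e [He H]]. destruct p as [x y].
  set (v := if Rle_dec 0 y then y + e / 2 else y - e / 2).
  assert (Hv : Rabs (v - y) = e / 2 /\ e / 2 <= Rabs v)
    by (unfold v; destruct Rle_dec; split_Rabs; lra).
  assert (Hxv : plateau f (x, v)) by (apply H; rewrite pdist_vertical; lra).
  exists (e / 2). split; [lra |]. intros q Hq.
  pose proof (pdist_fst q (x, y)). simpl in *.
  apply (Hxv (fst q)). simpl. lra.
Qed.

Hypothesis f_cont : continuity f.

Lemma plateau_closed : closed_set (plateau f).
Proof.
  intros [x y] Hcl z Hz. simpl in *.
  assert (approx : forall d, 0 < d -> exists u z', Rabs (u - x) < d /\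
            Rabs (z' - z) < 2 * d /\ 0 <= z' <= 1 /\ f z' = f u).
  { intros d Hd. destruct (Hcl d Hd) as [[u v] [Huv Hd']].
    pose proof (pdist_fst (u, v) (x, y)); pose proof (pdist_snd (u, v) (x, y)). simpl in *.
    (* project the point [z] of the segment at [(x, y)] onto the segment at [(u, v)] *)
    set (z' := u + Rmax (- Rabs v) (Rmin (Rabs v) (z - x))).
    assert (Hz' : Rabs (z' - u) <= Rabs v /\ Rabs (z' - z) < 2 * d)
      by (unfold z', Rmax, Rmin; repeat destruct Rle_dec; split_Rabs; lra).
    destruct (Huv z') as [Hz'01 Hfz']; [apply Hz' |].
    exists u, z'. repeat split; try lra; apply Hz' || exact Hfz'. }
  assert (Hz01 : 0 <= z <= 1).
  { split; apply Rnot_lt_le; intros Hout.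
    - destruct (approx (- z / 2)) as [u [z' Hu]]; [lra | split_Rabs; lra].
    - destruct (approx ((z - 1) / 2)) as [u [z' Hu]]; [lra | split_Rabs; lra]. }
  split; [exact Hz01 |].
  destruct (Req_dec (f z) (f x)) as [Heq | Hne]; [exact Heq | exfalso].
  set (e := Rabs (f z - f x)).
  assert (He : 0 < e) by (apply Rabs_pos_lt; lra).
  destruct (continuity_pt_ball f z (f_cont z) (e / 2)) as [d1 [Hd1 Hc1]]; [lra |].
  destruct (continuity_pt_ball f x (f_cont x) (e / 2)) as [d2 [Hd2 Hc2]]; [lra |].
  destruct (approx (Rmin (d1 / 2) d2)) as [u [z' [Hu [Hz' [_ Hfz']]]]];
    [apply Rmin_pos; lra |].
  pose proof (Rmin_l (d1 / 2) d2); pose proof (Rmin_r (d1 / 2) d2).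
  specialize (Hc1 z' ltac:(lra)). specialize (Hc2 u ltac:(lra)).
  unfold e in *. rewrite Hfz' in Hc1. split_Rabs; lra.
Qed.

Lemma plateau_C1_int : C1_int (plateau f) (fun p => f (fst p)) (fun _ => (0, 0)).
Proof.
  repeat split; try apply cont_on_pt_const.
  - intros p Hp. apply has_deriv_at_locally_const, interior_plateau_locally_const, Hp.
  - intros p _ e He.
    destruct (continuity_pt_ball f (fst p) (f_cont (fst p)) e He) as [d [Hd H]].
    exists d. split; [exact Hd |]. intros q _ Hq.
    apply H. pose proof (pdist_fst q p). lra.
Qed.

Hypothesis steep_at_0 : forall M d, 0 < d ->
  exists x, 0 < x <= 1 /\ x < d /\ M * x < f x - f 0.

Lemma plateau_not_C1 : ~ C1_on (plateau f) (fun p => f (fst p)).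
Proof.
  intros [df [_ Hdf]].
  destruct (Hdf (0, 0) (plateau_axis 0 ltac:(lra)) 1 ltac:(lra)) as [d [Hd H]].
  set (a := fst (df (0, 0))).
  destruct (steep_at_0 (Rabs a + 1) d Hd) as [x [Hx [Hxd Hsteep]]].
  assert (Hx0 : (x, 0) <> (0, 0)) by (intros E; injection E; lra).
  specialize (H (x, 0) (plateau_axis x ltac:(lra)) Hx0).
  rewrite pdist_horizontal, Rminus_0_r, Rabs_pos_eq in H by lra.
  specialize (H Hxd). unfold inner, psub in H. simpl in H. fold a in H.
  replace (snd (df (0, 0)) * (0 - 0)) with 0 in H by ring.
  pose proof (RRle_abs a). pose proof (RRle_abs (f x - f 0 - (a * (x - 0) + 0))). nra.
Qed.

Hypothesis plateaus_dense : forall x, 0 <= x <= 1 -> forall e, 0 < e ->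
  exists c r, r <> 0 /\ Rabs (c - x) < e /\ plateau f (c, r).

Lemma plateau_top_regular : top_regular (plateau f).
Proof.
  intros [x y]. split.
  - intros Hp e He. destruct (Req_dec y 0) as [-> | Hy].
    + destruct (plateaus_dense x (plateau_center x 0 Hp) e He) as [c [r [Hr [Hc Hcr]]]].
      exists (c, 0). split.
      * apply (plateau_interior c r); [exact Hcr |].
        rewrite Rminus_diag, Rabs_R0, Rplus_0_l. apply Rabs_pos_lt, Hr.
      * rewrite pdist_horizontal. exact Hc.
    + set (s := e / (Rabs y + e)).
      assert (Hy0 : 0 < Rabs y) by (apply Rabs_pos_lt, Hy).
      assert (Hs : s * (Rabs y + e) = e) by (unfold s; field; lra).
      assert (Hs01 : 0 < s < 1).
      { split; [apply Rdiv_lt_0_compat; lra | nra]. }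
      assert (Hv : Rabs (y * (1 - s)) = Rabs y * (1 - s))
        by (rewrite Rabs_mult, (Rabs_pos_eq (1 - s)); lra).
      exists (x, y * (1 - s)). split.
      * apply (plateau_interior x y); [exact Hp |].
        rewrite Rminus_diag, Rabs_R0, Rplus_0_l, Hv. nra.
      * rewrite pdist_vertical. replace (y * (1 - s) - y) with (- (s * y)) by ring.
        rewrite Rabs_Ropp, Rabs_mult, (Rabs_pos_eq s) by lra. nra.
  - intros Hcl. apply plateau_closed. intros e He.
    destruct (Hcl e He) as [q [Hq Hd]]. exists q. split; [apply interior_incl |]; assumption.
Qed.

End Plateau.

Lemma pow_le_1 x n : 0 <= x <= 1 -> x ^ n <= 1.
Proof.
  intros Hx. induction n as [| n IH]; simpl; [lra |].
  pose proof (pow_le x n ltac:(lra)). nra.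
Qed.

Lemma Cauchy_crit_geometric (u : nat -> R) :
  (forall k, Rabs (u (S k) - u k) <= (1/2)^k) -> Cauchy_crit u.
Proof.
  intros Hstep.
  assert (Htail : forall k p, Rabs (u (p + k)%nat - u k) <= 2 * (1/2)^k - 2 * (1/2)^(p + k)).
  { intros k p. induction p as [| p IH]; simpl.
    - rewrite Rminus_diag, Rabs_R0. lra.
    - pose proof (Hstep (p + k)%nat).
      pose proof (Rdist_tri (u (S (p + k))) (u k) (u (p + k)%nat)). unfold Rdist in *. lra. }
  intros e He.
  destruct (pow_lt_1_zero (1/2) ltac:(rewrite Rabs_pos_eq; lra) (e / 2) ltac:(lra)) as [N HN].
  exists N. intros n m Hn Hm. unfold Rdist.
  assert (Hclose : forall a b, (N <= a <= b)%nat -> Rabs (u b - u a) < e).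
  { intros a b Hab. replace b with (b - a + a)%nat by lia.
    specialize (Htail a (b - a)%nat). specialize (HN a ltac:(lia)).
    pose proof (pow_lt (1/2) (b - a + a) ltac:(lra)).
    rewrite Rabs_pos_eq in HN by (apply pow_le; lra). lra. }
  destruct (Nat.le_ge_cases n m).
  - rewrite <- Rabs_Ropp, Ropp_minus_distr. apply Hclose. lia.
  - apply Hclose. lia.
Qed.

Lemma Un_cv_const c : Un_cv (fun _ => c) c.
Proof.
  intros e He. exists O. intros. unfold Rdist. rewrite Rminus_diag, Rabs_R0. exact He.
Qed.

Lemma Un_cv_S u l : Un_cv u l -> Un_cv (fun n => u (S n)) l.
Proof. intros H e He. destruct (H e He) as [N HN]. exists N. intros n Hn. apply HN. lia. Qed.

Definition unit_ramp (g : R -> R) : Prop :=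
  (forall x, x <= 0 -> g x = 0) /\ (forall x, 1 <= x -> g x = 1) /\ (forall x, 0 <= g x <= 1).

Definition clamp01 (x : R) : R := Rmax 0 (Rmin 1 x).

Definition cantor_step (g : R -> R) (x : R) : R := (g (3 * x) + g (3 * x - 2)) / 2.

Fixpoint cantor_approx (k : nat) : R -> R :=
  match k with O => clamp01 | S k => cantor_step (cantor_approx k) end.

Lemma unit_ramp_clamp01 : unit_ramp clamp01.
Proof.
  unfold unit_ramp, clamp01, Rmax, Rmin. repeat split; intros; repeat destruct Rle_dec; lra.
Qed.

Lemma unit_ramp_cantor_step g : unit_ramp g -> unit_ramp (cantor_step g).
Proof.
  intros [H0 [H1 H01]]. unfold cantor_step. split; [| split]; intros x.
  - intros Hx. rewrite !H0 by lra. lra.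
  - intros Hx. rewrite !H1 by lra. lra.
  - pose proof (H01 (3 * x)); pose proof (H01 (3 * x - 2)). lra.
Qed.

Lemma unit_ramp_cantor_approx k : unit_ramp (cantor_approx k).
Proof.
  induction k as [| k IH]; simpl; [apply unit_ramp_clamp01 | apply unit_ramp_cantor_step, IH].
Qed.

(* For every [x], one of the two arguments [3x], [3x - 2] lies where both ramps agree. *)
Lemma cantor_step_contraction g h c : unit_ramp g -> unit_ramp h ->
  (forall x, Rabs (g x - h x) <= c) ->
  forall x, Rabs (cantor_step g x - cantor_step h x) <= c / 2.
Proof.
  intros [G0 [G1 _]] [H0 [H1 _]] Hc x. unfold cantor_step.
  destruct (Rle_dec (3 * x) 1).
  - rewrite (G0 (3 * x - 2)), (H0 (3 * x - 2)) by lra.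
    specialize (Hc (3 * x)). split_Rabs; lra.
  - rewrite (G1 (3 * x)), (H1 (3 * x)) by lra.
    specialize (Hc (3 * x - 2)). split_Rabs; lra.
Qed.

Lemma cantor_approx_step k x : Rabs (cantor_approx (S k) x - cantor_approx k x) <= (1/2)^k.
Proof.
  revert x. induction k as [| k IH]; intros x.
  - destruct (unit_ramp_cantor_approx 1) as [_ [_ A]].
    destruct (unit_ramp_cantor_approx 0) as [_ [_ B]].
    specialize (A x); specialize (B x). simpl pow. split_Rabs; lra.
  - replace ((1/2)^(S k)) with ((1/2)^k / 2) by (simpl; field).
    apply (cantor_step_contraction (cantor_approx (S k)) (cantor_approx k));
      [apply unit_ramp_cantor_approx .. | exact IH].
Qed.

Definition cantor (x : R) : R :=
  proj1_sig (R_complete _ (Cauchy_crit_geometric _ (fun k => cantor_approx_step k x))).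

Lemma cantor_cv x : Un_cv (fun k => cantor_approx k x) (cantor x).
Proof. unfold cantor. destruct R_complete as [l Hl]. exact Hl. Qed.

Lemma cantor_between a b x :
  (forall k, a <= cantor_approx k x <= b) -> a <= cantor x <= b.
Proof.
  intros H. split.
  - apply (Rle_cv_lim (Un := fun _ => a) (Vn := fun k => cantor_approx k x));
      [apply H | apply Un_cv_const | apply cantor_cv].
  - apply (Rle_cv_lim (Un := fun k => cantor_approx k x) (Vn := fun _ => b));
      [apply H | apply cantor_cv | apply Un_cv_const].
Qed.

Lemma unit_ramp_cantor : unit_ramp cantor.
Proof.
  split; [| split]; intros x.
  - intros Hx. apply Rle_antisym; apply (cantor_between 0 0); intros k;
      destruct (unit_ramp_cantor_approx k) as [H0 _]; rewrite H0 by exact Hx; lra.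
  - intros Hx. apply Rle_antisym; apply (cantor_between 1 1); intros k;
      destruct (unit_ramp_cantor_approx k) as [_ [H1 _]]; rewrite H1 by exact Hx; lra.
  - apply cantor_between. intros k. apply unit_ramp_cantor_approx.
Qed.

Lemma cantor_fixed x : cantor x = cantor_step cantor x.
Proof.
  apply (UL_sequence (fun k => cantor_approx (S k) x)).
  - exact (Un_cv_S (fun k => cantor_approx k x) _ (cantor_cv x)).
  - exact (CV_mult _ _ _ _ (CV_plus _ _ _ _ (cantor_cv (3 * x)) (cantor_cv (3 * x - 2)))
                         (Un_cv_const (/ 2))).
Qed.

Lemma cantor_0 : cantor 0 = 0.
Proof. apply unit_ramp_cantor. lra. Qed.

Lemma cantor_1 : cantor 1 = 1.
Proof. apply unit_ramp_cantor. lra. Qed.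

Lemma cantor_low x : x <= 2/3 -> cantor x = cantor (3 * x) / 2.
Proof.
  intros Hx. rewrite cantor_fixed. unfold cantor_step.
  destruct unit_ramp_cantor as [H0 _]. rewrite (H0 (3 * x - 2)) by lra. lra.
Qed.

Lemma cantor_high x : 1/3 <= x -> cantor x = (1 + cantor (3 * x - 2)) / 2.
Proof.
  intros Hx. rewrite cantor_fixed. unfold cantor_step.
  destruct unit_ramp_cantor as [_ [H1 _]]. rewrite (H1 (3 * x)) by lra. reflexivity.
Qed.

Lemma cantor_middle x : 1/3 <= x <= 2/3 -> cantor x = 1/2.
Proof.
  intros Hx. rewrite cantor_low by lra.
  destruct unit_ramp_cantor as [_ [H1 _]]. rewrite H1 by lra. lra.
Qed.

Lemma cantor_pow3 k : cantor ((1/3)^k) = (1/2)^k.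
Proof.
  induction k as [| k IH]; simpl pow; [apply cantor_1 |].
  assert ((1/3)^k <= 1) by (apply pow_le_1; lra).
  rewrite cantor_low by lra. replace (3 * (1/3 * (1/3)^k)) with ((1/3)^k) by field.
  rewrite IH. lra.
Qed.

Lemma cantor_modulus j x y : Rabs (x - y) <= (1/3)^j -> Rabs (cantor x - cantor y) <= (1/2)^j.
Proof.
  revert x y. induction j as [| j IH]; intros x y Hxy; simpl pow in *.
  - destruct unit_ramp_cantor as [_ [_ H01]].
    pose proof (H01 x); pose proof (H01 y). split_Rabs; lra.
  - assert (Hj : (1/3)^j <= 1) by (apply pow_le_1; lra).
    assert (H3 : Rabs (3 * x - 3 * y) <= (1/3)^j).
    { replace (3 * x - 3 * y) with (3 * (x - y)) by ring.
      rewrite Rabs_mult, (Rabs_pos_eq 3) by lra. lra. }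
    pose proof (IH (3 * x) (3 * y) H3) as Hlow.
    pose proof (IH (3 * x - 2) (3 * y - 2) ltac:(replace (3 * x - 2 - (3 * y - 2))
                                                with (3 * x - 3 * y) by ring; exact H3)) as Hhigh.
    clear IH. assert (Hxy' : Rabs (x - y) <= 1/3) by lra.
    destruct (Rle_dec x (2/3)); [destruct (Rle_dec y (2/3)) |].
    + rewrite (cantor_low x), (cantor_low y) by lra. split_Rabs; lra.
    + rewrite (cantor_high x), (cantor_high y) by (split_Rabs; lra). split_Rabs; lra.
    + rewrite (cantor_high x), (cantor_high y) by (split_Rabs; lra). split_Rabs; lra.
Qed.

Lemma continuity_cantor : continuity cantor.
Proof.
  intros x e He.
  destruct (pow_lt_1_zero (1/2) ltac:(rewrite Rabs_pos_eq; lra) e He) as [N HN].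
  exists ((1/3)^N). split; [apply Rlt_gt, pow_lt; lra |].
  intros y [_ Hy]. simpl in *. unfold Rdist in *.
  eapply Rle_lt_trans; [apply (cantor_modulus N); lra |].
  specialize (HN N (le_n N)). rewrite Rabs_pos_eq in HN by (apply pow_le; lra). exact HN.
Qed.

Lemma cantor_plateau_middle c r :
  1/3 <= c - Rabs r -> c + Rabs r <= 2/3 -> plateau cantor (c, r).
Proof.
  intros Hl Hr z Hz. simpl in *.
  rewrite (cantor_middle z), (cantor_middle c) by (split_Rabs; lra).
  split; [split_Rabs; lra | reflexivity].
Qed.

Lemma cantor_plateau_low c r : plateau cantor (c, r) -> plateau cantor (c / 3, r / 3).
Proof.
  intros H z Hz. pose proof (plateau_center _ _ _ H). unfold plateau in H. simpl in *.
  destruct (H (3 * z)) as [H3z Hf]; [split_Rabs; lra |].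
  rewrite (cantor_low z), (cantor_low (c / 3)) by lra.
  replace (3 * (c / 3)) with c by field. split; [lra | congruence].
Qed.

Lemma cantor_plateau_high c r : plateau cantor (c, r) -> plateau cantor ((c + 2) / 3, r / 3).
Proof.
  intros H z Hz. pose proof (plateau_center _ _ _ H). unfold plateau in H. simpl in *.
  destruct (H (3 * z - 2)) as [H3z Hf]; [split_Rabs; lra |].
  rewrite (cantor_high z), (cantor_high ((c + 2) / 3)) by lra.
  replace (3 * ((c + 2) / 3) - 2) with c by field. split; [lra | congruence].
Qed.

Lemma cantor_plateaus_near k x : 0 <= x <= 1 ->
  exists c r, r <> 0 /\ Rabs (c - x) <= (1/3)^k /\ plateau cantor (c, r).
Proof.
  revert x. induction k as [| k IH]; intros x Hx; simpl pow.
  - exists (1/2), (1/6). split; [lra | split].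
    + split_Rabs; lra.
    + apply cantor_plateau_middle; rewrite Rabs_pos_eq; lra.
  - destruct (Rle_dec x (1/3)) as [Hlow |]; [| destruct (Rle_dec (2/3) x) as [Hhigh |]].
    + destruct (IH (3 * x) ltac:(lra)) as [c [r [Hr [Hc Hcr]]]].
      exists (c / 3), (r / 3). split; [lra | split; [| apply cantor_plateau_low, Hcr]].
      split_Rabs; lra.
    + destruct (IH (3 * x - 2) ltac:(lra)) as [c [r [Hr [Hc Hcr]]]].
      exists ((c + 2) / 3), (r / 3). split; [lra | split; [| apply cantor_plateau_high, Hcr]].
      split_Rabs; lra.
    + exists x, (Rmin (x - 1/3) (2/3 - x)).
      pose proof (pow_lt (1/3) k ltac:(lra)).
      assert (Hm : 0 < Rmin (x - 1/3) (2/3 - x)) by (apply Rmin_pos; lra).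
      pose proof (Rmin_l (x - 1/3) (2/3 - x)); pose proof (Rmin_r (x - 1/3) (2/3 - x)).
      split; [lra | split].
      * rewrite Rminus_diag, Rabs_R0. lra.
      * apply cantor_plateau_middle; rewrite Rabs_pos_eq; lra.
Qed.

Lemma cantor_plateaus_dense x : 0 <= x <= 1 -> forall e, 0 < e ->
  exists c r, r <> 0 /\ Rabs (c - x) < e /\ plateau cantor (c, r).
Proof.
  intros Hx e He.
  destruct (pow_lt_1_zero (1/3) ltac:(rewrite Rabs_pos_eq; lra) e He) as [k Hk].
  specialize (Hk k (le_n k)). rewrite Rabs_pos_eq in Hk by (apply pow_le; lra).
  destruct (cantor_plateaus_near k x Hx) as [c [r [Hr [Hc Hcr]]]].
  exists c, r. split; [exact Hr | split; [lra | exact Hcr]].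
Qed.

Lemma cantor_steep_at_0 M d : 0 < d ->
  exists x, 0 < x <= 1 /\ x < d /\ M * x < cantor x - cantor 0.
Proof.
  intros Hd.
  destruct (pow_lt_1_zero (1/3) ltac:(rewrite Rabs_pos_eq; lra) d Hd) as [k1 Hk1].
  destruct (Pow_x_infinity (3/2) ltac:(rewrite Rabs_pos_eq; lra) (M + 1)) as [k2 Hk2].
  set (k := Nat.max k1 k2).
  specialize (Hk1 k (Nat.le_max_l _ _)). specialize (Hk2 k (Nat.le_max_r _ _)).
  rewrite Rabs_pos_eq in Hk1, Hk2 by (apply pow_le; lra).
  exists ((1/3)^k). pose proof (pow_lt (1/3) k ltac:(lra)).
  split; [split; [lra | apply pow_le_1; lra] | split; [exact Hk1 |]].
  rewrite cantor_pow3, cantor_0, Rminus_0_r.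
  replace ((1/2)^k) with ((3/2)^k * (1/3)^k) by (rewrite <- Rpow_mult_distr; f_equal; field).
  nra.
Qed.

Theorem mainTheorem4 :
  exists (K : pt -> Prop) (F : pt -> R) (dF : pt -> pt),
    compact_set K /\ top_regular K /\
    C1_int K F dF /\ ~ C1_on K F /\
    exists g : R -> pt,
      (forall t, 0 <= t <= 1 -> K (g t)) /\ rectifiable g /\
      path_integral_is dF g 0 /\ F (g 1) - F (g 0) = 1.
Proof.
  pose proof continuity_cantor as Hcont.
  exists (plateau cantor), (fun p => cantor (fst p)), (fun _ => (0, 0)).
  split; [split; [apply plateau_closed, Hcont | apply plateau_bounded] |].
  split; [exact (plateau_top_regular cantor Hcont cantor_plateaus_dense) |].
  split; [apply plateau_C1_int, Hcont |].
  split; [apply plateau_not_C1, cantor_steep_at_0 |].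
  exists axis_path. split; [exact (plateau_axis cantor) |].
  split; [exact rectifiable_axis_path |].
  split; [apply path_integral_zero_field |].
  simpl. rewrite cantor_1, cantor_0. ring.
Qed.
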